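(* Let $\Lambda_1$ be a probability measure on $[0,1]$ with $\Lambda_1(\{0\})=0$ (or $\Lambda_1\equiv0$), and let $$\Psi_1(q)=\int_{[0,1]}(qy-1+(1-y)^q)\frac{\Lambda_1(dy)}{y^2},\qquad q\ge1.$$ If $\int_{[0,1]}\frac{1}{\sqrt y}\Lambda_1(dy)<\infty$, then $\lim_{q\to\infty}\Psi_1(q)/q^{3/2}=0$.
   Context: In the paper, $\Lambda_1$ arises from a probability measure $\Lambda$ on $[0,1]$ with $\Lambda(\{0\})=c\in(0,1]$ via $\Lambda=c\delta_0+(1-c)\Lambda_1$. *)

From HB Require Import structures.
From mathcomp Require Import all_boot all_order all_algebra.
From mathcomp Require Import all_classical all_reals all_analysis.
Set Implicit Arguments. Unset Strict Implicit. Unset Printing Implicit Defensive.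
Import Order.TTheory GRing.Theory Num.Theory.
Import numFieldNormedType.Exports.
Local Open Scope classical_set_scope.
Local Open Scope ring_scope.

(* At y = 0 the integrand evaluates to 0 (since 0^-1 = 0 in MathComp);
   this point is Lambda_1-null by hypothesis, so it is irrelevant. *)
Definition Psi1 (R : realType) (mu : {measure set R -> \bar R}) (q : R) : \bar R :=
  (\int[mu]_(y in `[0%R, 1%R]) ((q * y - 1 + (1 - y) `^ q) / y ^+ 2)%:E)%E.

From HB Require Import structures.
From mathcomp Require Import all_boot all_order all_algebra.
From mathcomp Require Import all_classical all_reals all_analysis.
From mathcomp Require Import measurable_realfun.
From mathcomp Require Import ring lra.
Import Order.TTheory GRing.Theory Num.Theory.
Import numFieldNormedType.Exports.
Local Open Scope classical_set_scope.
Local Open Scope ring_scope.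

(* With P = (1 - y)^q and t = sqrt (q y), Bernoulli's inequality gives
   1 - t^2 <= P and 1 - y <= e^-y gives P (1 + t^2) <= 1; together they force
   t^2 - 1 + P <= t^3, i.e. the integrand of Psi1, divided by q^(3/2), is at
   most y^(-1/2), which is integrable by hypothesis.  The same quotient is also
   at most 1 / (y sqrt q), so it tends to 0 pointwise and dominated
   convergence along every sequence q_n -> +oo concludes. *)

Section dominated_convergence_pinfty.
Local Open Scope ereal_scope.
Context d (T : measurableType d) (R : realType).
Variables (mu : {measure set T -> \bar R}) (D : set T) (mD : measurable D).
Variables (f : R -> T -> \bar R) (l g : T -> \bar R).
Hypothesis mf : forall q, measurable_fun D (f q).
Hypothesis ml : measurable_fun D l.
Hypothesis f_l : {ae mu, forall x, D x -> f ^~ x @ +oo%R --> l x}.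
Hypothesis ig : mu.-integrable D g.
Hypothesis f_g : \forall q \near +oo%R, {ae mu, forall x, D x -> `|f q x| <= g x}.

Lemma dominated_convergence_pinfty :
  \int[mu]_(x in D) f q x @[q --> +oo%R] --> \int[mu]_(x in D) l x.
Proof.
apply/cvge_pinftyP => u u_oo.
have [N _ f_g_N] : \forall n \near \oo, {ae mu, forall x, D x -> `|f (u n) x| <= g x}.
  exact: u_oo f_g.
rewrite -(cvg_shiftn N).
have f_l_u : {ae mu, forall x, D x -> f (u (n + N)%N) x @[n --> \oo] --> l x}.
  apply: filterS f_l => x f_lx Dx.
  by apply: cvg_comp (f_lx Dx); rewrite cvg_shiftn.
have f_g_u : {ae mu, forall x n, D x -> `|f (u (n + N)%N) x| <= g x}.
  apply: filterS (ae_foralln (fun n => f_g_N _ (leq_addl n N))) => x f_gx n.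
  exact: f_gx.
by have [] := dominated_convergence mD (fun n => mf _) ml f_l_u ig f_g_u.
Qed.

End dominated_convergence_pinfty.
Arguments dominated_convergence_pinfty {d T R mu D} mD {f l g}.

Section powR_oneB.
Context {R : realType}.
Implicit Types q y : R.

Lemma powR_oneB_ge q y : 1 <= q -> 0 <= y <= 1 -> 1 - q * y <= (1 - y) `^ q.
Proof.
move=> q1 /andP[y0 y1].
have [->|q_neq1] := eqVneq q 1; first by rewrite powRr1 ?mul1r //; lra.
have q_gt1 : 1 < q by rewrite lt_neqAle eq_sym q_neq1.
have q_gt0 : 0 < q by lra.
have conj_gt0 : 0 < q / (q - 1) by rewrite divr_gt0 //; lra.
have conj_exp : q^-1 + (q / (q - 1))^-1 = 1.
  by rewrite invf_div; field; rewrite gt_eqF.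
(* Young's inequality for (1 - y) * 1 with the exponents q and q / (q - 1) *)
have y'_ge0 : 0 <= 1 - y by lra.
have := conjugate_powR y'_ge0 ler01 q_gt0 conj_gt0 conj_exp.
rewrite powR1 mulr1 mul1r invf_div => young.
have : (1 - y) * q <= ((1 - y) `^ q / q + (q - 1) / q) * q.
  by rewrite ler_wpM2r // ltW.
have -> : ((1 - y) `^ q / q + (q - 1) / q) * q = (1 - y) `^ q + (q - 1).
  by field; rewrite gt_eqF.
lra.
Qed.

Lemma powR_oneB_mul_le1 q y : 0 <= q -> 0 <= y <= 1 ->
  (1 - y) `^ q * (1 + q * y) <= 1.
Proof.
move=> q_ge0 /andP[y0 y1].
have le_expR : (1 - y) `^ q <= expR (- y * q).
  rewrite expRM ge0_ler_powR // ?nnegrE ?expR_ge0 ?subr_ge0 //.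
  by have := expR_ge1Dx (- y); rewrite addrC.
apply: le_trans (ler_wpM2r _ le_expR) _; first by rewrite addr_ge0 ?mulr_ge0.
apply: le_trans (ler_wpM2l (expR_ge0 _) (expR_ge1Dx (q * y))) _.
by rewrite -expRD mulNr mulrC addNr expR0.
Qed.

End powR_oneB.

Section Psi1_integrand.
Context {R : realType}.
Implicit Types q y t P : R.

Definition Psi1_integrand q y := (q * y - 1 + (1 - y) `^ q) / y ^+ 2.

Lemma powR32_sqrt q : 0 <= q -> q `^ (3/2) = q * Num.sqrt q.
Proof.
move=> q_ge0; have -> : (3/2 : R) = 1 + 2^-1 by field.
by rewrite powRD ?implybT ?powRr1 ?powR12_sqrt // paddr_eq0 ?oner_eq0.
Qed.

Lemma sqr_subr1D_le_cube t P : 0 < t -> 0 <= P ->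
  1 - t ^+ 2 <= P -> P * (1 + t ^+ 2) <= 1 -> t ^+ 2 - 1 + P <= t ^+ 3.
Proof.
move=> t_gt0 P_ge0 P_lb P_ub.
have P_le1 : P <= 1 by have := mulr_ge0 P_ge0 (sqr_ge0 t); lra.
have [t_ge1|t_lt1] := lerP 1 t.
  have : t ^+ 2 <= t ^+ 3 by rewrite exprS ler_peMl ?sqr_ge0.
  lra.
(* t^2 - 1 + P <= t^4 / (1 + t^2) <= t^4 <= t^3 *)
have : (t ^+ 2 - 1 + P) * (1 + t ^+ 2) <= t ^+ 4.
  have -> : (t ^+ 2 - 1 + P) * (1 + t ^+ 2) = t ^+ 4 - 1 + P * (1 + t ^+ 2) by ring.
  lra.
have : t ^+ 2 - 1 + P <= (t ^+ 2 - 1 + P) * (1 + t ^+ 2).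
  by rewrite ler_peMr ?lerDl ?sqr_ge0 //; lra.
have : t ^+ 4 <= t ^+ 3 by rewrite exprS ler_piMl ?exprn_ge0 ?ltW.
lra.
Qed.

Lemma Psi1_integrand0 q : Psi1_integrand q 0 = 0.
Proof. by rewrite /Psi1_integrand expr0n invr0 mulr0. Qed.

Lemma Psi1_integrand_ge0 q y : 1 <= q -> 0 <= y <= 1 -> 0 <= Psi1_integrand q y.
Proof.
move=> q1 y01; rewrite divr_ge0 ?sqr_ge0 //.
have := powR_oneB_ge _ _ q1 y01; lra.
Qed.

Lemma Psi1_integrand_le_sqrtV q y : 1 <= q -> 0 <= y <= 1 ->
  Psi1_integrand q y / q `^ (3/2) <= (Num.sqrt y)^-1.
Proof.
move=> q1 y01; have /andP[y_ge0 _] := y01.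
have [->|y_neq0] := eqVneq y 0; first by rewrite Psi1_integrand0 mul0r sqrtr0 invr0.
have q_gt0 : 0 < q by lra.
have y_gt0 : 0 < y by rewrite lt_neqAle eq_sym y_neq0.
have sq_gt0 : 0 < Num.sqrt q by rewrite sqrtr_gt0.
have sy_gt0 : 0 < Num.sqrt y by rewrite sqrtr_gt0.
have den_gt0 : 0 < y ^+ 2 * (q * Num.sqrt q) by rewrite !mulr_gt0 ?exprn_gt0.
rewrite powR32_sqrt ?(ltW q_gt0) // /Psi1_integrand -mulrA -invfM ler_pdivrMr //.
have := powR_oneB_ge _ _ q1 y01; have := powR_oneB_mul_le1 _ _ (ltW q_gt0) y01.
have := powR_ge0 (1 - y) q.
set P := (1 - y) `^ q; set a := Num.sqrt q; set b := Num.sqrt y.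
have -> : q = a ^+ 2 by rewrite sqr_sqrtr ?ltW.
have -> : y = b ^+ 2 by rewrite sqr_sqrtr ?ltW.
have -> : b^-1 * ((b ^+ 2) ^+ 2 * (a ^+ 2 * a)) = (a * b) ^+ 3.
  by field; rewrite gt_eqF.
rewrite -exprMn => P_ge0 P_ub P_lb.
by apply: sqr_subr1D_le_cube; rewrite ?mulr_gt0.
Qed.

Lemma Psi1_integrand_le_inv q y : 0 < q -> 0 < y <= 1 ->
  Psi1_integrand q y / q `^ (3/2) <= (y * Num.sqrt q)^-1.
Proof.
move=> q_gt0 /andP[y_gt0 y1]; have y01 : 0 <= y <= 1 by rewrite ltW.
have sq_gt0 : 0 < Num.sqrt q by rewrite sqrtr_gt0.
have den_gt0 : 0 < y ^+ 2 * (q * Num.sqrt q) by rewrite !mulr_gt0 ?exprn_gt0.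
rewrite powR32_sqrt ?(ltW q_gt0) // /Psi1_integrand -mulrA -invfM ler_pdivrMr //.
have -> : (y * Num.sqrt q)^-1 * (y ^+ 2 * (q * Num.sqrt q)) = q * y.
  by field; rewrite !gt_eqF.
have := powR_oneB_mul_le1 _ _ (ltW q_gt0) y01.
have := mulr_ge0 (powR_ge0 (1 - y) q) (mulr_ge0 (ltW q_gt0) (ltW y_gt0)).
lra.
Qed.

Lemma Psi1_integrand_cvg0 y : 0 <= y <= 1 ->
  Psi1_integrand q y / q `^ (3/2) @[q --> +oo] --> 0.
Proof.
move=> y01; have /andP[y_ge0 y1] := y01.
have [->|y_neq0] := eqVneq y 0.
  by under eq_fun do rewrite Psi1_integrand0 mul0r; exact: cvg_cst.
have y_gt0 : 0 < y by rewrite lt_neqAle eq_sym y_neq0.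
apply: (@squeeze_cvgr _ _ _ _ (cst 0) (fun q => (y * Num.sqrt q)^-1)).
- near=> q; have q1 : 1 <= q by near: q; apply: nbhs_pinfty_ge; exact: num_real.
  rewrite divr_ge0 ?powR_ge0 ?Psi1_integrand_ge0 //=.
  by rewrite Psi1_integrand_le_inv ?y_gt0 //; lra.
- exact: cvg_cst.
- apply/gtr0_cvgV0; first by near=> q; rewrite mulr_gt0 ?sqrtr_gt0.
  apply/cvgryPge => A; near=> q.
  have : `|A| / y <= Num.sqrt q.
    rewrite -[_ / y]ger0_norm ?divr_ge0 // -sqrtr_sqr ler_sqrt;
      by near: q; apply: nbhs_pinfty_ge; exact: num_real.
  by rewrite ler_pdivrMr // mulrC => /(le_trans (ler_norm A)).
Unshelve. all: by end_near.
Qed.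

End Psi1_integrand.

Section measurable_Psi1_integrand.
Context {R : realType}.

Lemma measurable_inv : measurable_fun [set: R] GRing.inv.
Proof.
rewrite -(setUv [set 0]); apply/measurable_funU => //; first exact: measurableC.
split; first exact: measurable_fun_set1.
apply: open_continuous_measurable_fun.
  apply: closed_openC; apply: compact_closed; first exact: Rhausdorff.
  exact: finite_compact (finite_set1 _).
by move=> x /[!inE] /eqP x_neq0; exact: inv_continuous.
Qed.

Lemma measurable_sqrtV : measurable_fun [set: R] (fun y => (Num.sqrt y)^-1).
Proof.
apply: measurableT_comp measurable_inv _.
exact: continuous_measurable_fun (@sqrt_continuous R).
Qed.

Lemma measurable_Psi1_integrand q : measurable_fun [set: R] (Psi1_integrand q).
Proof.
apply: measurable_funM; last first.
  by apply: measurableT_comp measurable_inv _; exact: measurable_funX.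
apply: measurable_funD; first by apply: measurable_funB => //; exact: measurable_funM.
by apply: measurableT_comp (measurable_powR q) _; exact: measurable_funB.
Qed.

End measurable_Psi1_integrand.

Theorem proposition1p5 (R : realType) (mu : {measure set R -> \bar R}) :
  ((mu setT = 1%E /\ mu (~` `[0%R, 1%R]) = 0%E) \/ mu setT = 0%E) ->
  mu [set 0%R] = 0%E ->
  (\int[mu]_(y in `[0%R, 1%R]) ((Num.sqrt y)^-1)%:E < +oo)%E ->
  ((Psi1 mu q * ((q `^ (3/2))^-1)%:E)%E @[q --> +oo%R] --> 0%E).
Proof.
move=> _ _ sqrtV_int.
pose D : set R := [set` `[0%R, 1%R]].
have mD : measurable D by exact: measurable_itv.
have inD y : D y -> 0 <= y <= 1 by rewrite /D /= in_itv.
pose f (q y : R) := (Psi1_integrand q y / q `^ (3/2))%:E.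
have mf q : measurable_fun D (f q).
  apply/measurable_EFinP/measurable_funM => //.
  exact: measurable_funTS (measurable_Psi1_integrand q).
have f_0 : {ae mu, forall y, D y -> f ^~ y @ +oo --> 0%E}.
  apply: aeW => y /inD y01.
  by apply: cvg_EFin; [exact: nearW | exact: Psi1_integrand_cvg0].
have ig : mu.-integrable D (fun y => ((Num.sqrt y)^-1)%:E).
  apply/integrableP; split.
    by apply/measurable_EFinP/measurable_funTS; exact: measurable_sqrtV.
  under eq_integral => y _ do rewrite gee0_abs ?lee_fin ?invr_ge0 ?sqrtr_ge0 //.
  exact: sqrtV_int.
have q_ge1 : \forall q \near +oo%R, 1 <= q :> R.
  by apply: nbhs_pinfty_ge; exact: num_real.
have f_dom : \forall q \near +oo,
    {ae mu, forall y, D y -> (`|f q y| <= ((Num.sqrt y)^-1)%:E)%E}.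
  near=> q; have q1 : 1 <= q by near: q; exact: q_ge1.
  apply: aeW => y /inD y01.
  rewrite gee0_abs ?lee_fin ?Psi1_integrand_le_sqrtV //.
  by rewrite divr_ge0 ?powR_ge0 ?Psi1_integrand_ge0.
have := dominated_convergence_pinfty mD mf (measurable_cst _) f_0 ig f_dom.
rewrite integral0; apply: cvg_trans; apply: near_eq_cvg; near=> q.
have q1 : 1 <= q by near: q; exact: q_ge1.
rewrite /Psi1 -ge0_integralZr //.
- by apply/measurable_EFinP/measurable_funTS; exact: measurable_Psi1_integrand.
- by move=> y /inD y01; rewrite lee_fin Psi1_integrand_ge0.
- by rewrite lee_fin invr_ge0 powR_ge0.
Unshelve. all: by end_near.
Qed.
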